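(* Let $M\geq 1$ and let $r$ be a DSIC mechanism in the bilateral cooperation model described in the context, with competitive ratio $\alpha$. For $d\in\{1,\dots,M\}$ let $B^d$ be the set of vectors $b\in\mathbb{R}^M$ with $b_i=1$ for $i\in\{1,\dots,d\}$ and $b_i\leq 0$ for $i\in\{d+1,\dots,M\}$. For $\varepsilon\in(0,1)$ let $s^\varepsilon\in\mathbb{R}^M$ be given by $s^\varepsilon_i=\varepsilon^{M-i}$. Then for every $d\in\{1,\dots,M\}$, every $b\in B^d$ and every $\varepsilon\in(0,1)$: $$\sum_{i=1}^d r_i(b,s^\varepsilon)\ \geq\ d\cdot(\alpha-2\varepsilon).$$
   Context: Bilateral cooperation model: there are two agents, a buyer and a seller, and options $0,1,\dots,M$. A buyer utility vector is $b=(b_1,\dots,b_M)\in\mathbb{R}^M$ and a seller utility vector is $s=(s_1,\dots,s_M)\in\mathbb{R}^M$ (entries may be positive, zero or negative); by convention $b_0=s_0=0$. Define $\mathrm{Feasible}(b,s)=\{i\in\{0,\dots,M\}: b_i\geq 0 \text{ and } s_i\geq 0\}$ and $OPT(b,s)=\max_{i\in \mathrm{Feasible}(b,s)}(b_i+s_i)$. A mechanism is a function $r$ mapping each pair of reported vectors $(b',s')$ to a probability vector $(r_0(b',s'),\dots,r_M(b',s'))$. The mechanism $r$ is DSIC if for all $b,b',s,s'\in\mathbb{R}^M$: $\sum_{i=1}^M r_i(b,s')\,b_i\geq \sum_{i=1}^M r_i(b',s')\,b_i$ and $\sum_{i=1}^M r_i(b',s)\,s_i\geq \sum_{i=1}^M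 r_i(b',s')\,s_i$. The gain at true vectors $(b,s)$ is $G_r(b,s)=\sum_{i=1}^M r_i(b,s)(b_i+s_i)$, and the competitive ratio is $C_r=\min_{b,s} G_r(b,s)/OPT(b,s)$; ''competitive ratio $\alpha$'' means $C_r=\alpha$. *)

From HB Require Import structures.
From mathcomp Require Import all_boot all_order all_algebra.
From mathcomp Require Import reals.
Set Implicit Arguments. Unset Strict Implicit. Unset Printing Implicit Defensive.
Import Order.TTheory GRing.Theory Num.Theory.
Local Open Scope ring_scope.

Section Bilateral.
Variables (R : realType) (M : nat).

(* A utility vector (b_1,...,b_M); entry b_i is stored at ordinal i-1. *)
Definition uvec := 'I_M -> R.

(* Options 0..M are the ordinals of 'I_M.+1; ext b i = b_i with b_0 = 0. *)
Definition ext (b : uvec) (i : 'I_M.+1) : R :=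
  match unlift ord0 i with None => 0 | Some j => b j end.

Definition mechanism := uvec -> uvec -> 'I_M.+1 -> R.

Definition is_prob_vec (p : 'I_M.+1 -> R) : Prop :=
  (forall i, 0 <= p i) /\ \sum_(i < M.+1) p i = 1.

Definition is_mechanism (r : mechanism) : Prop :=
  forall b s, is_prob_vec (r b s).

(* sum_{i=1}^M p_i v_i  (the i = 0 term is 0 since v_0 = 0) *)
Definition expected (p : 'I_M.+1 -> R) (v : uvec) : R :=
  \sum_(i < M.+1) p i * ext v i.

Definition DSIC (r : mechanism) : Prop :=
  forall b b' s s' : uvec,
    expected (r b' s') b <= expected (r b s') b /\
    expected (r b' s') s <= expected (r b' s) s.

Definition gain (r : mechanism) (b s : uvec) : R :=
  \sum_(i < M.+1) r b s i * (ext b i + ext s i).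

Definition feasible (b s : uvec) (i : 'I_M.+1) : bool :=
  (0 <= ext b i) && (0 <= ext s i).

(* max over feasible options of b_i + s_i; option 0 is always feasible with
   value 0 and all feasible values are >= 0, so 0 is a correct neutral. *)
Definition OPT (b s : uvec) : R :=
  \big[Num.max/0]_(i < M.+1 | feasible b s i) (ext b i + ext s i).

(* C_r = alpha: alpha is the infimum of G_r(b,s)/OPT(b,s) over all (b,s)
   for which the ratio is defined (OPT(b,s) > 0). *)
Definition competitive_ratio (r : mechanism) (alpha : R) : Prop :=
  (forall b s, 0 < OPT b s -> alpha <= gain r b s / OPT b s) /\
  (forall e, 0 < e -> exists b s, 0 < OPT b s /\ gain r b s / OPT b s < alpha + e).

(* s^eps_i = eps^(M-i); ordinal j stands for i = j+1. *)
Definition s_eps (eps : R) : uvec := fun j => eps ^+ (M - j.+1).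

Definition in_Bd (d : nat) (b : uvec) : Prop :=
  (forall j : 'I_M, (j.+1 <= d)%N -> b j = 1) /\
  (forall j : 'I_M, (d < j.+1)%N -> b j <= 0).

End Bilateral.

(** Climb a staircase of buyer reports, from a report with nonpositive values up to
    one dominated by b, raising the values of options 1, ..., d to 1 one at a time
    while the later options carry a large penalty.  By DSIC each step increases the
    buyer's utility by at least the probability of the raised option, and against
    the steep seller s^eps the competitive ratio forces that probability up to
    alpha - 2 eps.  The bottom of the staircase has nonnegative utility, and the
    utility of b is at most the probability of options 1, ..., d. *)

From HB Require Import structures.
From mathcomp Require Import all_boot all_order all_algebra.
From mathcomp Require Import reals.
From mathcomp Require Import lra zify.
Set Implicit Arguments. Unset Strict Implicit. Unset Printing Implicit Defensive.
Import Order.TTheory GRing.Theory Num.Theory.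
Local Open Scope ring_scope.

Section Bilateral.
Variables (R : realType) (M : nat).
Implicit Types (b c s v w : uvec R M) (p : 'I_M.+1 -> R).

Lemma ext_lift v k : ext v (lift ord0 k) = v k.
Proof. by rewrite /ext liftK. Qed.

Lemma ext_ord0 v : ext v ord0 = 0.
Proof. by rewrite /ext unlift_none. Qed.

Lemma expectedE p v : expected p v = \sum_(k < M) p (lift ord0 k) * v k.
Proof.
rewrite /expected big_ord_recl ext_ord0 mulr0 add0r.
by apply: eq_bigr => k _; rewrite ext_lift.
Qed.

Lemma gainE (r : mechanism R M) b s :
  gain r b s = \sum_(k < M) r b s (lift ord0 k) * (b k + s k).
Proof.
rewrite /gain big_ord_recl !ext_ord0 addr0 mulr0 add0r.
by apply: eq_bigr => k _; rewrite !ext_lift.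
Qed.

Lemma le_OPT b s k : 0 <= b k -> 0 <= s k -> b k + s k <= OPT b s.
Proof.
move=> b_ge0 s_ge0; rewrite -!ext_lift.
by apply: le_bigmax_cond; rewrite /feasible !ext_lift b_ge0 s_ge0.
Qed.

Lemma ler_expected p v v' :
  (forall i, 0 <= p i) -> (forall k, v k <= v' k) -> expected p v <= expected p v'.
Proof.
by move=> p_ge0 le_vv'; rewrite !expectedE; apply: ler_sum => k _; rewrite ler_wpM2l.
Qed.

Lemma sum_options_lift p (d : nat) :
  \sum_(i < M.+1 | (0 < i <= d)%N) p i = \sum_(k < M | (k < d)%N) p (lift ord0 k).
Proof. by rewrite big_mkcond big_ord_recl /= add0r [RHS]big_mkcond. Qed.

Lemma expected_Bd_le p (d : nat) b : (forall i, 0 <= p i) -> in_Bd d b ->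
  expected p b <= \sum_(k < M | (k < d)%N) p (lift ord0 k).
Proof.
move=> p_ge0 [b_one b_le0]; rewrite expectedE [X in _ <= X]big_mkcond /=.
apply: ler_sum => k _; case: ltnP => hk; first by rewrite b_one ?mulr1.
by rewrite mulr_ge0_le0 ?b_le0.
Qed.

Lemma in_Bd_le1 (d : nat) b k : in_Bd d b -> b k <= 1.
Proof.
case=> b_one b_le0; case: (ltnP d k.+1) => [/b_le0 b_k_le0|/b_one -> //].
exact: le_trans b_k_le0 ler01.
Qed.

Section UnitEps.
Variable eps : R.
Hypotheses (eps_gt0 : 0 < eps) (eps_le1 : eps <= 1).

Lemma s_eps_gt0 k : 0 < @s_eps R M eps k.
Proof. exact: exprn_gt0. Qed.

Lemma s_eps_le1 k : @s_eps R M eps k <= 1.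
Proof. exact/exprn_ile1/eps_le1/ltW. Qed.

Lemma s_eps_steep (k k0 : 'I_M) :
  (k < k0)%N -> @s_eps R M eps k <= eps * @s_eps R M eps k0.
Proof.
move=> lt_kk0; rewrite /s_eps -exprS; apply: (ler_wiXn2l (ltW eps_gt0) eps_le1).
by have := ltn_ord k0; lia.
Qed.

Lemma s_eps_ge k : eps ^+ M <= eps * @s_eps R M eps k.
Proof.
rewrite /s_eps -exprS; apply: (ler_wiXn2l (ltW eps_gt0) eps_le1).
by have := ltn_ord k; lia.
Qed.

Lemma s_eps_penalty k : 2 <= 2 / eps ^+ M * (eps * @s_eps R M eps k).
Proof.
have epsM_gt0 : 0 < eps ^+ M by rewrite exprn_gt0.
rewrite -[leLHS](divfK (lt0r_neq0 epsM_gt0)) ler_wpM2l ?s_eps_ge //.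
by rewrite divr_ge0 // ltW.
Qed.

Lemma s_eps_penalty_ge1 : 1 <= 2 / eps ^+ M.
Proof.
rewrite ler_pdivlMr ?exprn_gt0 // mul1r.
by apply: le_trans (exprn_ile1 _ (ltW eps_gt0) eps_le1) _; rewrite ler1n.
Qed.

End UnitEps.

Definition staircase (j : nat) (x : R) w : uvec R M :=
  fun k => if (k < j)%N then 1 else if k == j :> nat then x else w k.

Lemma staircase_pivot j x w (lt_jM : (j < M)%N) :
  staircase j x w (Ordinal lt_jM) = x.
Proof. by rewrite /staircase /= ltnn eqxx. Qed.

Lemma staircase_above j x w (k : 'I_M) : (j < k)%N -> staircase j x w k = w k.
Proof. by move=> lt_jk; rewrite /staircase ltnNge ltnW //= gtn_eqF. Qed.

Lemma staircase_le1 j x w : x <= 1 -> (forall k, w k <= 1) ->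
  forall k, staircase j x w k <= 1.
Proof. by move=> x_le1 w_le1 k; rewrite /staircase; do 2?case: ifP => //. Qed.

Lemma staircase_le j x y w : x <= y -> forall k, staircase j x w k <= staircase j y w k.
Proof. by move=> le_xy k; rewrite /staircase; do 2?case: ifP. Qed.

Lemma staircase_le_succ j w : (forall k, w k <= 0) ->
  forall k, staircase j 1 w k <= staircase j.+1 0 w k.
Proof.
move=> w_le0 k; rewrite /staircase ltnS.
by case: ltngtP => // _; case: eqP.
Qed.

Lemma staircase_le_Bd (d : nat) b w : (0 < d)%N -> in_Bd d b ->
  (forall k, w k <= b k) -> forall k, staircase d.-1 1 w k <= b k.
Proof.
move=> d_gt0 [b_one _] le_wb k; rewrite /staircase.
case: ltngtP => [lt_kd|//|eq_kd]; rewrite b_one //; lia.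
Qed.

Definition buyer_utility (r : mechanism R M) s c := expected (r c s) c.

Section Mechanism.
Variable r : mechanism R M.
Hypothesis r_mech : is_mechanism r.

Lemma mechanism_ge0 b s i : 0 <= r b s i.
Proof. by case: (r_mech b s). Qed.

Lemma sum_mechanism_le1 b s : \sum_(k < M) r b s (lift ord0 k) <= 1.
Proof.
case: (r_mech b s) => _; rewrite big_ord_recl => <-.
by rewrite lerDr mechanism_ge0.
Qed.

Lemma mechanism_le1 b s k : r b s (lift ord0 k) <= 1.
Proof.
apply: le_trans (sum_mechanism_le1 b s); rewrite (bigD1 k) //= lerDl.
by apply: sumr_ge0 => i _; apply: mechanism_ge0.
Qed.

Hypothesis r_DSIC : DSIC r.

Lemma buyer_utility_incr s c c' k : (forall k, c k <= c' k) ->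
  buyer_utility r s c + r c s (lift ord0 k) * (c' k - c k) <= buyer_utility r s c'.
Proof.
move=> le_cc'; apply: le_trans (r_DSIC c' c s s).1.
rewrite /buyer_utility !expectedE (bigD1 k) //= [X in _ <= X](bigD1 k) //=.
rewrite addrAC -mulrDr subrKC lerD2l.
by apply: ler_sum => i _; rewrite ler_wpM2l ?mechanism_ge0.
Qed.

Lemma buyer_utility_mono s c c' : (forall k, c k <= c' k) ->
  buyer_utility r s c <= buyer_utility r s c'.
Proof.
move=> le_cc'; apply: le_trans (r_DSIC c' c s s).1.
by apply: ler_expected => // i; apply: mechanism_ge0.
Qed.

Variable alpha : R.
Hypotheses (r_ratio : competitive_ratio r alpha) (alpha_ge0 : 0 <= alpha).

Lemma ratio_le_gain b s k : 0 <= b k -> 0 < s k -> alpha * (b k + s k) <= gain r b s.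
Proof.
move=> b_ge0 s_gt0; have OPT_gt0 : 0 < OPT b s.
  by apply: (lt_le_trans _ (le_OPT b_ge0 (ltW s_gt0))); rewrite ltr_wpDl.
apply: le_trans (ler_wpM2l alpha_ge0 (le_OPT b_ge0 (ltW s_gt0))) _.
by rewrite -ler_pdivlMr //; apply: r_ratio.1.
Qed.

Lemma gain_ge0 b s k : 0 <= b k -> 0 < s k -> 0 <= gain r b s.
Proof.
move=> b_ge0 s_gt0; apply: le_trans (ratio_le_gain b_ge0 s_gt0).
by rewrite mulr_ge0 // addr_ge0 // ltW.
Qed.

(* The seller may pretend to value only the pivot [k0]; since the buyer values it
   at 0, the competitive ratio then forces probability at least [alpha] on it. *)
Lemma seller_utility_ge s c k0 : (forall k, c k <= 1) -> c k0 = 0 ->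
  0 < s k0 -> (forall k, 0 <= s k) -> alpha * s k0 <= expected (r c s) s.
Proof.
move=> c_le1 c_k0 s_k0_gt0 s_ge0.
pose t : uvec R M := fun k => if k == k0 then s k0 else -1.
have t_k0 : t k0 = s k0 by rewrite /t eqxx.
apply: le_trans (r_DSIC c c s t).2; rewrite expectedE.
have := @ratio_le_gain c t k0; rewrite c_k0 t_k0 add0r.
move=> /(_ (lexx 0) s_k0_gt0) /le_trans; apply.
rewrite gainE (bigD1 k0) //= [X in _ <= X](bigD1 k0) //= c_k0 t_k0 add0r lerD2l.
apply: ler_sum => k /negPf k_neq; rewrite /t k_neq.
by have := mechanism_ge0 c t (lift ord0 k); have := c_le1 k; have := s_ge0 k; nra.
Qed.

(* A buyer with nonpositive values can overstate how bad the other options are,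
   reporting [N * c - 1] off the zero option [k0]; nonnegativity of the gain
   bounds the resulting loss by [1 / N]. *)
Lemma buyer_utility_lb s c k0 N : (forall k, c k <= 0) -> c k0 = 0 ->
  0 < s k0 -> (forall k, s k <= 1) -> 1 <= N -> -1 <= N * buyer_utility r s c.
Proof.
move=> c_le0 c_k0 s_k0_gt0 s_le1 N_ge1.
pose Z : uvec R M := fun k => if k == k0 then 0 else N * c k - 1.
have Z_k0 : Z k0 = 0 by rewrite /Z eqxx.
have le_Zc k : Z k <= c k.
  by rewrite /Z; case: eqP => [->|_]; [rewrite c_k0 | have := c_le0 k; nra].
have gain_Z : gain r Z s <= N * expected (r Z s) c + 1.
  rewrite gainE expectedE mulr_sumr.
  apply: le_trans (_ : _ <= \sum_k (N * (r Z s (lift ord0 k) * c k)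
                       + (if k == k0 then r Z s (lift ord0 k) else 0))) _.
    apply: ler_sum => k _; have := mechanism_ge0 Z s (lift ord0 k); have := s_le1 k.
    by rewrite /Z; case: eqP => [->|_]; [rewrite c_k0|]; nra.
  by rewrite big_split /= -big_mkcond big_pred1_eq lerD2l mechanism_le1.
have := @gain_ge0 Z s k0; rewrite Z_k0 => /(_ (lexx 0) s_k0_gt0).
have := ler_expected (mechanism_ge0 Z s) le_Zc.
have := (r_DSIC c Z s s).1; rewrite /buyer_utility; nra.
Qed.

Lemma buyer_utility_ge0 s c k0 : (forall k, c k <= 0) -> c k0 = 0 ->
  0 < s k0 -> (forall k, s k <= 1) -> 0 <= buyer_utility r s c.
Proof.
move=> c_le0 c_k0 s_k0_gt0 s_le1; rewrite leNgt; apply/negP => V_lt0.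
set V := buyer_utility r s c in V_lt0 *.
have N_ge1 : 1 <= 1 - 2 / V by rewrite lerDl oppr_ge0 ltW // pmulr_rlt0 // invr_lt0.
have := buyer_utility_lb c_le0 c_k0 s_k0_gt0 s_le1 N_ge1.
rewrite -/V mulrBl mul1r divfK ?ltr0_neq0 //; lra.
Qed.

Section SteepSeller.
Variables (s : uvec R M) (eps K : R).
Hypotheses (eps_gt0 : 0 < eps) (s_gt0 : forall k, 0 < s k) (s_le1 : forall k, s k <= 1).
Hypothesis s_steep : forall k k0 : 'I_M, (k < k0)%N -> s k <= eps * s k0.
Hypothesis K_large : forall k, 2 <= K * (eps * s k).

(* Options below the pivot [k0] are worth at most [eps * s k0] to the seller and
   the gain bounds the mass [B] above it, so the seller's utility, which is at
   least [alpha * s k0], must come from the pivot. *)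
Lemma pivot_prob_ge c k0 : (forall k, c k <= 1) -> c k0 = 0 ->
  (forall k : 'I_M, (k0 < k)%N -> c k <= 1 - K) ->
  alpha - 2 * eps <= r c s (lift ord0 k0).
Proof.
move=> c_le1 c_k0 c_above; have s0_gt0 := s_gt0 k0.
have eps_s0_gt0 : 0 < eps * s k0 by rewrite mulr_gt0.
have K_gt0 : 0 < K by have := K_large k0; nra.
set B := \sum_(k < M | (k0 < k)%N) r c s (lift ord0 k).
have gain_le : gain r c s <= 2 - K * B.
  rewrite gainE; apply: le_trans (_ : _ <= \sum_k (2 * r c s (lift ord0 k)
      - K * (if (k0 < k)%N then r c s (lift ord0 k) else 0))) _.
    apply: ler_sum => k _; have := mechanism_ge0 c s (lift ord0 k).
    have := c_le1 k; have := s_le1 k; case: ltnP => [/c_above|_]; nra.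
  rewrite sumrB -!mulr_sumr -big_mkcond /= -/B lerD2r.
  by rewrite -[X in _ <= X]mulr1 ler_pM2l ?sum_mechanism_le1.
have B_le : B <= eps * s k0.
  rewrite -(ler_pM2l K_gt0); apply: le_trans (K_large k0).
  by have := @gain_ge0 c s k0; rewrite c_k0 => /(_ (lexx 0) s0_gt0); lra.
have E_le : expected (r c s) s <= eps * s k0 + s k0 * r c s (lift ord0 k0) + B.
  rewrite expectedE; apply: le_trans (_ : _ <= \sum_k (eps * s k0 * r c s (lift ord0 k)
      + (if k == k0 then s k0 * r c s (lift ord0 k) else 0)
      + (if (k0 < k)%N then r c s (lift ord0 k) else 0))) _.
    apply: ler_sum => k _; have := mechanism_ge0 c s (lift ord0 k).
    case: eqP => [->|ne_kk0]; first by rewrite ltnn; nra.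
    case: ltnP => [_|le_kk0]; first by have := s_le1 k; nra.
    have lt_kk0 : (k < k0)%N.
      by rewrite ltn_neqAle le_kk0 andbT; apply: contra_notN ne_kk0 => /eqP /val_inj.
    by have := s_steep lt_kk0; nra.
  rewrite !big_split /= -mulr_sumr -!big_mkcond big_pred1_eq /=.
  by rewrite -/B !lerD2r ger_pMr ?sum_mechanism_le1.
have := seller_utility_ge c_le1 c_k0 s0_gt0 (fun k => ltW (s_gt0 k)); nra.
Qed.

Variable w : uvec R M.
Hypotheses (w_le0 : forall k, w k <= 0) (w_low : forall k, w k <= 1 - K).

Lemma buyer_utility_staircase_step j (lt_jM : (j < M)%N) :
  buyer_utility r s (staircase j 0 w) + (alpha - 2 * eps)
  <= buyer_utility r s (staircase j 1 w).
Proof.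
have := buyer_utility_incr s (Ordinal lt_jM) (staircase_le j w ler01).
rewrite !staircase_pivot subr0 mulr1 => /(le_trans _); apply; rewrite lerD2l.
apply: pivot_prob_ge => [k||k lt_jk]; last by rewrite staircase_above.
  by apply: staircase_le1 => // i; apply: le_trans (w_le0 i) _.
exact: staircase_pivot.
Qed.

Lemma buyer_utility_staircase j : (j < M)%N ->
  buyer_utility r s (staircase 0 0 w) + j.+1%:R * (alpha - 2 * eps)
  <= buyer_utility r s (staircase j 1 w).
Proof.
elim: j => [|j IH] lt_jM; first by rewrite mul1r; apply: buyer_utility_staircase_step.
have := IH (ltnW lt_jM); have := buyer_utility_mono s (staircase_le_succ j w_le0).
have := buyer_utility_staircase_step lt_jM.
by rewrite -[j.+2]addn1 natrD mulrDl mul1r; lra.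
Qed.

End SteepSeller.

End Mechanism.

End Bilateral.

Theorem lemma2 (R : realType) (M : nat) (r : mechanism R M) (alpha : R) :
  (1 <= M)%N ->
  is_mechanism r -> DSIC r -> competitive_ratio r alpha ->
  forall (d : nat), (1 <= d <= M)%N ->
  forall b : uvec R M, in_Bd d b ->
  forall eps : R, 0 < eps < 1 ->
  d%:R * (alpha - 2 * eps) <= \sum_(i < M.+1 | (0 < i <= d)%N) r b (@s_eps R M eps) i.
Proof.
move=> M_gt0 r_mech r_DSIC r_ratio d /andP[d_gt0 d_le_M] b b_Bd eps /andP[eps_gt0 eps_lt1].
have eps_le1 := ltW eps_lt1; set s := @s_eps R M eps; rewrite sum_options_lift.
have [alpha_le0|/ltW alpha_ge0] := leP alpha 0.
  apply: le_trans (sumr_ge0 _ (fun k _ => mechanism_ge0 r_mech _ _ _)).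
  by rewrite mulr_ge0_le0 //; lra.
pose K := 2 / eps ^+ M; pose w k := b k - K.
have K_ge1 : 1 <= K := s_eps_penalty_ge1 M eps_gt0 eps_le1.
have w_le0 k : w k <= 0 by have := in_Bd_le1 k b_Bd; rewrite /w; lra.
have w_low k : w k <= 1 - K by have := in_Bd_le1 k b_Bd; rewrite /w; lra.
have le_wb k : w k <= b k by rewrite /w; lra.
have := buyer_utility_staircase r_mech r_DSIC r_ratio alpha_ge0 eps_gt0
  (s_eps_gt0 eps_gt0) (s_eps_le1 eps_gt0 eps_le1) (s_eps_steep eps_gt0 eps_le1)
  (s_eps_penalty eps_gt0 eps_le1) w_le0 w_low (_ : (d.-1 < M)%N).
rewrite prednK // => /(_ ltac:(lia)) climb.
have start : 0 <= buyer_utility r s (staircase 0 0 w).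
  apply: (buyer_utility_ge0 r_mech r_DSIC r_ratio alpha_ge0 (k0 := Ordinal M_gt0)).
  - by move=> k; rewrite /staircase /=; case: ifP.
  - exact: staircase_pivot.
  - exact: s_eps_gt0.
  - exact: s_eps_le1.
have top := buyer_utility_mono r_mech r_DSIC s (staircase_le_Bd d_gt0 b_Bd le_wb).
have := expected_Bd_le (mechanism_ge0 r_mech b s) b_Bd.
by rewrite /buyer_utility in climb start top *; lra.
Qed.
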